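(* Let $G$ and $H$ be groups and $\varphi\colon G\to \mathrm{Aut}(H)$ an action. Define subgroups of $H$ recursively by $L_1=V_1=H$ and, for $n\geq 2$, $K_n=\langle \varphi(g)(h)h^{-1} : g\in\Gamma_{n-1}(G), h\in H\rangle$, $H_n=\langle \varphi(g)(h)h^{-1} : g\in G, h\in L_{n-1}\rangle$, $\widetilde H_n=\langle \varphi(g)(h)h^{-1} : g\in G, h\in V_{n-1}\rangle$, $L_n=\langle K_n, H_n, [H,L_{n-1}]\rangle$, $V_n=\langle \widetilde H_n, [H,V_{n-1}]\rangle$. Then for every $n\geq 1$, $\varphi$ restricts to an action of $\Gamma_n(G)$ on $L_n$ and of $G^{(n-1)}$ on $V_n$ (by automorphisms), and: (1) $\Gamma_n(H\rtimes_\varphi G)=L_n\rtimes_\varphi \Gamma_n(G)$; (2) $(H\rtimes_\varphi G)^{(n-1)}\subseteq V_n\rtimes_\varphi G^{(n-1)}$.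
   Context: $[x,y]=xyx^{-1}y^{-1}$; for subgroups $A,B$, $[A,B]$ is the subgroup generated by all $[a,b]$. Lower central series: $\Gamma_1(G)=G$, $\Gamma_{i+1}(G)=[\Gamma_i(G),G]$. Derived series: $G^{(0)}=G$, $G^{(i+1)}=[G^{(i)},G^{(i)}]$. In $H\rtimes_\varphi G$ the product is $(h,g)(h',g')=(h\,\varphi(g)(h'),gg')$. *)

(* groups are arbitrary (possibly infinite), so we
   work with a carrier type and explicit operations; subsets are predicates. *)
Set Implicit Arguments.

Definition full {T : Type} : T -> Prop := fun _ => True.

Definition is_group {T : Type} (mul : T -> T -> T) (inv : T -> T) (one : T) : Prop :=
  (forall x y z, mul x (mul y z) = mul (mul x y) z) /\
  (forall x, mul one x = x) /\ (forall x, mul x one = x) /\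
  (forall x, mul (inv x) x = one) /\ (forall x, mul x (inv x) = one).

Definition comm {T : Type} (mul : T -> T -> T) (inv : T -> T) (x y : T) : T :=
  mul (mul (mul x y) (inv x)) (inv y).

Inductive gen {T : Type} (mul : T -> T -> T) (inv : T -> T) (one : T)
    (S : T -> Prop) : T -> Prop :=
  | gen_base : forall x, S x -> gen mul inv one S x
  | gen_one : gen mul inv one S one
  | gen_mul : forall x y, gen mul inv one S x -> gen mul inv one S y ->
      gen mul inv one S (mul x y)
  | gen_inv : forall x, gen mul inv one S x -> gen mul inv one S (inv x).

Definition commsub {T : Type} (mul : T -> T -> T) (inv : T -> T) (one : T)
    (A B : T -> Prop) : T -> Prop :=
  gen mul inv one (fun z => exists a b, A a /\ B b /\ z = comm mul inv a b).

(* lcs k = Gamma_{k+1}; so Gamma_1 = lcs 0 = whole group *)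
Fixpoint lcs {T : Type} (mul : T -> T -> T) (inv : T -> T) (one : T)
    (k : nat) : T -> Prop :=
  match k with
  | 0 => full
  | S k' => commsub mul inv one (lcs mul inv one k') full
  end.

(* derived k = G^{(k)} *)
Fixpoint derived {T : Type} (mul : T -> T -> T) (inv : T -> T) (one : T)
    (k : nat) : T -> Prop :=
  match k with
  | 0 => full
  | S k' => commsub mul inv one (derived mul inv one k') (derived mul inv one k')
  end.

Definition is_hom {T : Type} (mul : T -> T -> T) (f : T -> T) : Prop :=
  forall x y, f (mul x y) = mul (f x) (f y).

Definition bijective_fun {T : Type} (f : T -> T) : Prop :=
  (forall x y, f x = f y -> x = y) /\ (forall y, exists x, f x = y).

Definition is_action {G H : Type} (mulG : G -> G -> G) (oneG : G)
    (mulH : H -> H -> H) (phi : G -> H -> H) : Prop :=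
  (forall g, is_hom mulH (phi g) /\ bijective_fun (phi g)) /\
  (forall h, phi oneG h = h) /\
  (forall g g' h, phi (mulG g g') h = phi g (phi g' h)).

Definition twset {G H : Type} (mulH : H -> H -> H) (invH : H -> H)
    (phi : G -> H -> H) (A : G -> Prop) (B : H -> Prop) : H -> Prop :=
  fun z => exists g h, A g /\ B h /\ z = mulH (phi g h) (invH h).

(* Lseq k = L_{k+1}:  L_1 = H,
   L_n = < K_n, H_n, [H, L_{n-1}] >  with
   K_n = < phi(g)(h)h^-1 : g in Gamma_{n-1}(G), h in H >,
   H_n = < phi(g)(h)h^-1 : g in G, h in L_{n-1} > *)
Fixpoint Lseq {G H : Type} (mulG : G -> G -> G) (invG : G -> G) (oneG : G)
    (mulH : H -> H -> H) (invH : H -> H) (oneH : H) (phi : G -> H -> H)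
    (k : nat) : H -> Prop :=
  match k with
  | 0 => full
  | S k' =>
      let Lprev := Lseq mulG invG oneG mulH invH oneH phi k' in
      gen mulH invH oneH (fun x =>
        gen mulH invH oneH (twset mulH invH phi (lcs mulG invG oneG k') full) x \/
        gen mulH invH oneH (twset mulH invH phi full Lprev) x \/
        commsub mulH invH oneH full Lprev x)
  end.

(* Vseq k = V_{k+1}:  V_1 = H,  V_n = < Ht_n, [H, V_{n-1}] > with
   Ht_n = < phi(g)(h)h^-1 : g in G, h in V_{n-1} > *)
Fixpoint Vseq {G H : Type} (mulH : H -> H -> H) (invH : H -> H) (oneH : H)
    (phi : G -> H -> H) (k : nat) : H -> Prop :=
  match k with
  | 0 => full
  | S k' =>
      let Vprev := Vseq mulH invH oneH phi k' in
      gen mulH invH oneH (fun x =>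
        gen mulH invH oneH (twset mulH invH phi full Vprev) x \/
        commsub mulH invH oneH full Vprev x)
  end.

Definition sd_mul {G H : Type} (mulG : G -> G -> G) (mulH : H -> H -> H)
    (phi : G -> H -> H) (p q : H * G) : H * G :=
  (mulH (fst p) (phi (snd p) (fst q)), mulG (snd p) (snd q)).
Definition sd_inv {G H : Type} (invG : G -> G) (invH : H -> H)
    (phi : G -> H -> H) (p : H * G) : H * G :=
  (phi (invG (snd p)) (invH (fst p)), invG (snd p)).
Definition sd_one {G H : Type} (oneG : G) (oneH : H) : H * G := (oneH, oneG).

Definition sdset {G H : Type} (A : H -> Prop) (B : G -> Prop) : H * G -> Prop :=
  fun p => A (fst p) /\ B (snd p).

Definition restricts {G H : Type} (phi : G -> H -> H) (B : G -> Prop)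
    (A : H -> Prop) : Prop :=
  forall g, B g ->
    (forall h, A h -> A (phi g h)) /\ (forall h, A h -> exists h', A h' /\ phi g h' = h).

From Pilot Require Import Defs.
Set Implicit Arguments.

(* Write tw g h = phi(g)(h) h^-1.  In H x|_phi G the H-coordinate of
   [(h,g),(h',g')] is h phi(g)(h') phi(g g' g^-1)(h)^-1 phi([g,g'])(h')^-1,
   a product of conjugates of tw g h', [h,h'], (tw (g g' g^-1) h)^-1 and
   (tw [g,g'] h')^-1.  As L_n and V_n are phi-invariant normal subgroups, induction
   on n puts the generating commutators of Gamma_{n+1} and of the n-th derived
   subgroup of the product into L_{n+1} x| Gamma_{n+1}(G), resp.
   V_{n+1} x| G^(n).  Conversely (tw g h, 1) = [(1,g),(h,1)], and the
   embeddings h |-> (h,1), g |-> (1,g) preserve commutators, so every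
   generator of L_{n+1} x| Gamma_{n+1}(G) lies in Gamma_{n+1} of the product. *)

Definition is_subgroup {T : Type} (mul : T -> T -> T) (inv : T -> T) (one : T)
    (P : T -> Prop) : Prop :=
  P one /\ (forall x y, P x -> P y -> P (mul x y)) /\ (forall x, P x -> P (inv x)).

Definition is_normal {T : Type} (mul : T -> T -> T) (inv : T -> T)
    (P : T -> Prop) : Prop :=
  forall x y, P y -> P (mul (mul x y) (inv x)).

Section GroupIdentities.
Variables (T : Type) (mul : T -> T -> T) (inv : T -> T) (one : T).
Hypothesis hT : is_group mul inv one.

Lemma mulgA x y z : mul x (mul y z) = mul (mul x y) z. Proof. apply hT. Qed.
Lemma mul1g x : mul one x = x. Proof. apply hT. Qed.
Lemma mulg1 x : mul x one = x. Proof. apply hT. Qed.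
Lemma mulVg x : mul (inv x) x = one. Proof. apply hT. Qed.
Lemma mulgV x : mul x (inv x) = one. Proof. apply hT. Qed.

Lemma mulKg x y : mul (inv x) (mul x y) = y.
Proof. rewrite mulgA, mulVg, mul1g. reflexivity. Qed.

Lemma mulKVg x y : mul x (mul (inv x) y) = y.
Proof. rewrite mulgA, mulgV, mul1g. reflexivity. Qed.

Lemma invg_unique x y : mul x y = one -> y = inv x.
Proof. intro E. rewrite <- (mulKg x y), E, mulg1. reflexivity. Qed.

Lemma invgK x : inv (inv x) = x.
Proof. symmetry. apply invg_unique, mulVg. Qed.

Lemma invMg x y : inv (mul x y) = mul (inv y) (inv x).
Proof. symmetry. apply invg_unique. rewrite <- mulgA, mulKVg, mulgV. reflexivity. Qed.

Lemma invg1 : inv one = one.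
Proof. symmetry. apply invg_unique, mul1g. Qed.

End GroupIdentities.

Ltac gsimpl hT := repeat progress (rewrite ?(invMg hT), ?(invgK hT), ?(invg1 hT);
  rewrite <- ?(mulgA hT);
  rewrite ?(mulKVg hT), ?(mulKg hT), ?(mulgV hT), ?(mulVg hT), ?(mul1g hT), ?(mulg1 hT)).

Section Subgroups.
Variables (T : Type) (mul : T -> T -> T) (inv : T -> T) (one : T).
Hypothesis hT : is_group mul inv one.
Local Notation comm := (comm mul inv).
Local Notation gen := (gen mul inv one).
Local Notation subgroup := (is_subgroup mul inv one).

Lemma invg_comm x y : inv (comm x y) = comm y x.
Proof. unfold Defs.comm. gsimpl hT. reflexivity. Qed.

Lemma conjg_comm x y : mul (mul x y) (inv x) = mul (comm x y) y.
Proof. unfold Defs.comm. gsimpl hT. reflexivity. Qed.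

Lemma full_subgroup : subgroup full.
Proof. repeat split. Qed.

Lemma gen_subgroup S : subgroup (gen S).
Proof. split; [apply gen_one | split; [apply gen_mul | apply gen_inv]]. Qed.

Lemma gen_minimal S P : subgroup P -> (forall x, S x -> P x) ->
  forall x, gen S x -> P x.
Proof. intros [P1 [PM PV]] HS x Hx. induction Hx; auto. Qed.

Lemma comm_closed_normal P : subgroup P -> (forall x y, P y -> P (comm x y)) ->
  is_normal mul inv P.
Proof.
  intros [_ [PM _]] Pc x y Py. rewrite conjg_comm. apply PM; auto.
Qed.

End Subgroups.

Section Morphism.
Variables (T T' : Type) (mul : T -> T -> T) (inv : T -> T) (one : T)
  (mul' : T' -> T' -> T') (inv' : T' -> T') (one' : T').
Hypotheses (hT : is_group mul inv one) (hT' : is_group mul' inv' one').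
Variable f : T -> T'.
Hypothesis f_mul : forall x y, f (mul x y) = mul' (f x) (f y).

Lemma morph1 : f one = one'.
Proof.
  assert (idem : mul' (f one) (f one) = f one)
    by (rewrite <- f_mul, (mul1g hT); reflexivity).
  rewrite <- (mulKg hT' (f one) (f one)), idem, (mulVg hT'). reflexivity.
Qed.

Lemma morphV x : f (inv x) = inv' (f x).
Proof. apply (invg_unique hT'). rewrite <- f_mul, (mulgV hT). apply morph1. Qed.

Lemma morph_comm x y : f (comm mul inv x y) = comm mul' inv' (f x) (f y).
Proof. unfold comm. rewrite !f_mul, !morphV. reflexivity. Qed.

Lemma gen_morph_sub S Q : is_subgroup mul' inv' one' Q ->
  (forall x, S x -> Q (f x)) -> forall x, gen mul inv one S x -> Q (f x).
Proof.
  intros [Q1 [QM QV]] HS. apply (gen_minimal (P := fun x => Q (f x))); auto.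
  split; [rewrite morph1; exact Q1 | split].
  - intros x y Hx Hy. rewrite f_mul. auto.
  - intros x Hx. rewrite morphV. auto.
Qed.

Lemma lcs_S_morph_sub k Q : is_subgroup mul' inv' one' Q ->
  (forall a b, lcs mul inv one k a -> Q (f (comm mul inv a b))) ->
  forall x, lcs mul inv one (S k) x -> Q (f x).
Proof.
  intros hQ Hc. apply gen_morph_sub; auto.
  intros z [a [b [Ha [_ ->]]]]. auto.
Qed.

End Morphism.

Section CentralSeries.
Variables (T : Type) (mul : T -> T -> T) (inv : T -> T) (one : T).
Hypothesis hT : is_group mul inv one.
Local Notation comm := (comm mul inv).
Local Notation lcs := (lcs mul inv one).
Local Notation derived := (derived mul inv one).

Lemma lcs_subgroup k : is_subgroup mul inv one (lcs k).
Proof. destruct k; [apply full_subgroup | apply gen_subgroup]. Qed.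

Lemma derived_subgroup k : is_subgroup mul inv one (derived k).
Proof. destruct k; [apply full_subgroup | apply gen_subgroup]. Qed.

Lemma lcs_S_mem k a b : lcs k a -> lcs (S k) (comm a b).
Proof. intro Ha. apply gen_base. exists a, b. repeat split; auto. Qed.

Lemma derived_S_mem k a b : derived k a -> derived k b -> derived (S k) (comm a b).
Proof. intros Ha Hb. apply gen_base. exists a, b. auto. Qed.

Lemma lcs_decr k x : lcs (S k) x -> lcs k x.
Proof.
  revert x. induction k; [intros; exact I|].
  apply (lcs_S_morph_sub hT hT (fun x => x) (fun _ _ => eq_refl)
           (lcs_subgroup (S k))).
  intros a b Ha. apply lcs_S_mem, IHk, Ha.
Qed.

Lemma lcs_normal k : is_normal mul inv (lcs k).
Proof.
  apply (comm_closed_normal hT (lcs_subgroup k)).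
  destruct k as [|k]; [intros; exact I|]. intros x y Hy.
  rewrite <- (invg_comm hT). apply (lcs_subgroup (S k)).
  apply lcs_S_mem, lcs_decr, Hy.
Qed.

End CentralSeries.

Section Action.
Variables (G H : Type) (mulG : G -> G -> G) (invG : G -> G) (oneG : G)
  (mulH : H -> H -> H) (invH : H -> H) (oneH : H).
Hypotheses (hG : is_group mulG invG oneG) (hH : is_group mulH invH oneH).
Variable phi : G -> H -> H.
Hypothesis hphi : is_action mulG oneG mulH phi.

Local Notation tw g h := (mulH (phi g h) (invH h)).
Local Notation commH := (comm mulH invH).
Local Notation Gam := (lcs mulG invG oneG).
Local Notation L := (Lseq mulG invG oneG mulH invH oneH phi).
Local Notation V := (Vseq mulH invH oneH phi).
Local Notation subgroupH := (is_subgroup mulH invH oneH).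

Lemma phi_mul g x y : phi g (mulH x y) = mulH (phi g x) (phi g y).
Proof. apply hphi. Qed.

Lemma phiM g g' x : phi (mulG g g') x = phi g (phi g' x).
Proof. apply hphi. Qed.

Lemma phi1 x : phi oneG x = x.
Proof. apply hphi. Qed.

Lemma phi_one g : phi g oneH = oneH.
Proof. exact (morph1 hH hH _ (phi_mul g)). Qed.

Lemma phi_inv g x : phi g (invH x) = invH (phi g x).
Proof. exact (morphV hH hH _ (phi_mul g) x). Qed.

Lemma phi_invK g x : phi g (phi (invG g) x) = x.
Proof. rewrite <- phiM, (mulgV hG). apply phi1. Qed.

Lemma phi_tw g x h : phi g (tw x h) = mulH (tw (mulG g x) h) (invH (tw g h)).
Proof. rewrite phi_mul, phi_inv, phiM. gsimpl hH. reflexivity. Qed.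

Lemma phi_tw_conj g x h :
  phi g (tw x h) = tw (mulG (mulG g x) (invG g)) (phi g h).
Proof.
  rewrite phi_mul, phi_inv, !phiM, <- (phiM (invG g) g), (mulVg hG), phi1.
  reflexivity.
Qed.

Lemma restricts_of_invariant (B : G -> Prop) (A : H -> Prop) :
  (forall g h, A h -> A (phi g h)) -> restricts phi B A.
Proof.
  intros HA g _. split; [auto|].
  intros h Hh. exists (phi (invG g) h). split; [auto | apply phi_invK].
Qed.

Lemma Lseq_subgroup k : subgroupH (L k).
Proof. destruct k; [apply full_subgroup | apply gen_subgroup]. Qed.

Lemma Lseq_tw_lcs_mem k x h : Gam k x -> L (S k) (tw x h).
Proof. intro. apply gen_base. left. apply gen_base. exists x, h. repeat split; auto. Qed.

Lemma Lseq_tw_mem k x h : L k h -> L (S k) (tw x h).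
Proof. intro. apply gen_base. right. left. apply gen_base. exists x, h. repeat split; auto. Qed.

Lemma Lseq_comm_mem k x y : L k y -> L (S k) (commH x y).
Proof. intro. apply gen_base. right. right. apply gen_base. exists x, y. repeat split; auto. Qed.

Lemma Lseq_S_morph_sub k (T : Type) (mul : T -> T -> T) (inv : T -> T) (one : T)
  (hT : is_group mul inv one) (f : H -> T)
  (f_mul : forall x y, f (mulH x y) = mul (f x) (f y)) Q :
  is_subgroup mul inv one Q ->
  (forall x h, Gam k x -> Q (f (tw x h))) ->
  (forall x h, L k h -> Q (f (tw x h))) ->
  (forall x y, L k y -> Q (f (commH x y))) ->
  forall z, L (S k) z -> Q (f z).
Proof.
  intros hQ HK HL HC. apply (gen_morph_sub hH hT f f_mul hQ).
  intros z [A|[A|A]]; revert z A; apply (gen_morph_sub hH hT f f_mul hQ);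
    intros z [x [h [Hx [Hh ->]]]]; auto.
Qed.

Lemma Lseq_decr k z : L (S k) z -> L k z.
Proof.
  revert z. induction k; [intros; exact I|].
  apply (Lseq_S_morph_sub hH (fun z => z) (fun _ _ => eq_refl) (Lseq_subgroup (S k))).
  - intros x h Hx. apply Lseq_tw_lcs_mem, (lcs_decr hG), Hx.
  - intros x h Hh. apply Lseq_tw_mem, IHk, Hh.
  - intros x y Hy. apply Lseq_comm_mem, IHk, Hy.
Qed.

Lemma Lseq_normal k : is_normal mulH invH (L k).
Proof.
  apply (comm_closed_normal hH (Lseq_subgroup k)).
  destruct k as [|k]; [intros; exact I|].
  intros x y Hy. apply Lseq_comm_mem, Lseq_decr, Hy.
Qed.

Lemma Lseq_phi k g h : L k h -> L k (phi g h).
Proof.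
  revert h. induction k; [intros; exact I|].
  destruct (Lseq_subgroup (S k)) as [_ [LM LV]].
  apply (Lseq_S_morph_sub hH _ (phi_mul g) (Lseq_subgroup (S k))).
  - intros x h Hx. rewrite phi_tw_conj. apply Lseq_tw_lcs_mem, (lcs_normal hG), Hx.
  - intros x h Hh. rewrite phi_tw. apply LM; [|apply LV]; apply Lseq_tw_mem, Hh.
  - intros x y Hy. rewrite (morph_comm hH hH _ (phi_mul g)). apply Lseq_comm_mem, IHk, Hy.
Qed.

Lemma Vseq_subgroup k : subgroupH (V k).
Proof. destruct k; [apply full_subgroup | apply gen_subgroup]. Qed.

Lemma Vseq_tw_mem k x h : V k h -> V (S k) (tw x h).
Proof. intro. apply gen_base. left. apply gen_base. exists x, h. repeat split; auto. Qed.

Lemma Vseq_comm_mem k x y : V k y -> V (S k) (commH x y).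
Proof. intro. apply gen_base. right. apply gen_base. exists x, y. repeat split; auto. Qed.

Lemma Vseq_S_morph_sub k (f : H -> H)
  (f_mul : forall x y, f (mulH x y) = mulH (f x) (f y)) Q :
  subgroupH Q ->
  (forall x h, V k h -> Q (f (tw x h))) ->
  (forall x y, V k y -> Q (f (commH x y))) ->
  forall z, V (S k) z -> Q (f z).
Proof.
  intros hQ HV HC. apply (gen_morph_sub hH hH f f_mul hQ).
  intros z [A|A]; revert z A; apply (gen_morph_sub hH hH f f_mul hQ);
    intros z [x [h [Hx [Hh ->]]]]; auto.
Qed.

Lemma Vseq_decr k z : V (S k) z -> V k z.
Proof.
  revert z. induction k; [intros; exact I|].
  apply (Vseq_S_morph_sub (fun z => z) (fun _ _ => eq_refl) (Vseq_subgroup (S k))).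
  - intros x h Hh. apply Vseq_tw_mem, IHk, Hh.
  - intros x y Hy. apply Vseq_comm_mem, IHk, Hy.
Qed.

Lemma Vseq_normal k : is_normal mulH invH (V k).
Proof.
  apply (comm_closed_normal hH (Vseq_subgroup k)).
  destruct k as [|k]; [intros; exact I|].
  intros x y Hy. apply Vseq_comm_mem, Vseq_decr, Hy.
Qed.

Lemma Vseq_phi k g h : V k h -> V k (phi g h).
Proof.
  revert h. induction k; [intros; exact I|].
  destruct (Vseq_subgroup (S k)) as [_ [VM VV]].
  apply (Vseq_S_morph_sub _ (phi_mul g) (Vseq_subgroup (S k))).
  - intros x h Hh. rewrite phi_tw. apply VM; [|apply VV]; apply Vseq_tw_mem, Hh.
  - intros x y Hy. rewrite (morph_comm hH hH _ (phi_mul g)). apply Vseq_comm_mem, IHk, Hy.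
Qed.

Local Notation sdm := (sd_mul mulG mulH phi).
Local Notation sdi := (sd_inv invG invH phi).
Local Notation sde := (sd_one oneG oneH).
Local Notation lcsS := (lcs sdm sdi sde).
Local Notation derS := (derived sdm sdi sde).

Lemma sd_group : is_group sdm sdi sde.
Proof.
  unfold sd_mul, sd_inv, sd_one.
  repeat split; intros; simpl.
  - rewrite phi_mul, phiM, (mulgA hH), (mulgA hG). reflexivity.
  - rewrite phi1, !(mul1g hH), (mul1g hG). destruct x; reflexivity.
  - rewrite phi_one, (mulg1 hH), (mulg1 hG). destruct x; reflexivity.
  - rewrite <- phi_mul, (mulVg hH), phi_one, (mulVg hG). reflexivity.
  - rewrite phi_invK, (mulgV hH), (mulgV hG). reflexivity.
Qed.

Definition inH (h : H) : H * G := (h, oneG).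
Definition inG (g : G) : H * G := (oneH, g).

Lemma inH_mul x y : inH (mulH x y) = sdm (inH x) (inH y).
Proof. unfold inH, sd_mul. simpl. rewrite phi1, (mulg1 hG). reflexivity. Qed.

Lemma inG_mul x y : inG (mulG x y) = sdm (inG x) (inG y).
Proof. unfold inG, sd_mul. simpl. rewrite phi_one, (mulg1 hH). reflexivity. Qed.

Lemma sd_pair h g : (h, g) = sdm (inH h) (inG g).
Proof. unfold inH, inG, sd_mul. simpl. rewrite phi_one, (mulg1 hH), (mul1g hG). reflexivity. Qed.

Lemma sd_comm_inG_inH x h : comm sdm sdi (inG x) (inH h) = inH (tw x h).
Proof.
  unfold comm, inH, inG, sd_mul, sd_inv. simpl.
  rewrite (invg1 hH), (invg1 hG), !phi_one, !(mulg1 hG), (mulgV hG), !phi1.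
  gsimpl hH. reflexivity.
Qed.

Lemma sd_comm_fst h g h' g' :
  fst (comm sdm sdi (h, g) (h', g')) =
  mulH (mulH (mulH h (phi g h')) (invH (phi (mulG (mulG g g') (invG g)) h)))
       (invH (phi (comm mulG invG g g') h')).
Proof. unfold comm, sd_mul, sd_inv. simpl. rewrite <- !phiM, !phi_inv. reflexivity. Qed.

Lemma sd_comm_fst_mem N : subgroupH N -> is_normal mulH invH N ->
  forall h g h' g',
  N (tw g h') -> N (tw (mulG (mulG g g') (invG g)) h) ->
  N (tw (comm mulG invG g g') h') -> N (commH h h') ->
  N (fst (comm sdm sdi (h, g) (h', g'))).
Proof.
  intros [_ [NM NV]] hN h g h' g' N1 N2 N3 N4. rewrite sd_comm_fst.
  assert (decomp : forall a b c,
    mulH (mulH (mulH h a) (invH b)) (invH c) =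
    mulH (mulH (mulH (mulH (mulH h (mulH a (invH h'))) (invH h)) (commH h h'))
      (mulH (mulH h' (invH (mulH b (invH h)))) (invH h')))
      (invH (mulH c (invH h'))))
    by (intros; unfold comm; gsimpl hH; reflexivity).
  rewrite decomp. auto 10.
Qed.

Lemma sdset_subgroup (A : H -> Prop) (B : G -> Prop) :
  subgroupH A -> (forall g h, A h -> A (phi g h)) ->
  is_subgroup mulG invG oneG B -> is_subgroup sdm sdi sde (sdset A B).
Proof.
  intros [A1 [AM AV]] HA [B1 [BM BV]].
  split; [split; auto | split].
  - intros [h g] [h' g'] [Hh Hg] [Hh' Hg']. split; simpl in *; auto.
  - intros [h g] [Hh Hg]. split; simpl in *; auto.
Qed.

Lemma lcs_sd_sub k p : lcsS k p -> sdset (L k) (Gam k) p.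
Proof.
  revert p. induction k; [intros; split; exact I|].
  apply (gen_minimal (sdset_subgroup (Lseq_subgroup (S k)) (Lseq_phi (S k))
                                     (lcs_subgroup mulG invG oneG (S k)))).
  intros z [[h g] [[h' g'] [Hp [_ ->]]]].
  destruct (IHk _ Hp) as [Hh Hg]. simpl in Hh, Hg. split.
  - apply (sd_comm_fst_mem (Lseq_subgroup (S k)) (Lseq_normal (S k))).
    + apply Lseq_tw_lcs_mem, Hg.
    + apply Lseq_tw_mem, Hh.
    + apply Lseq_tw_lcs_mem, (lcs_decr hG), (lcs_S_mem _ _ _ _ _ _ Hg).
    + rewrite <- (invg_comm hH). apply (Lseq_subgroup (S k)), Lseq_comm_mem, Hh.
  - apply (lcs_S_mem _ _ _ _ _ _ Hg).
Qed.

Lemma lcs_sd_sup k h g : L k h -> Gam k g -> lcsS k (h, g).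
Proof.
  revert h g. induction k as [|k IHk]; [intros; exact I|]. intros h g Hh Hg.
  destruct (Lseq_subgroup k) as [L1 _].
  destruct (lcs_subgroup sdm sdi sde (S k)) as [_ [SM SV]].
  rewrite sd_pair. apply SM; [revert h Hh | revert g Hg].
  - apply (Lseq_S_morph_sub sd_group _ inH_mul (lcs_subgroup sdm sdi sde (S k))).
    + intros x h Hx. rewrite <- sd_comm_inG_inH.
      apply lcs_S_mem, IHk; [exact L1 | exact Hx].
    + intros x h Hh. rewrite <- sd_comm_inG_inH, <- (invg_comm sd_group).
      apply SV, lcs_S_mem, IHk; [exact Hh | apply (lcs_subgroup mulG invG oneG k)].
    + intros x y Hy. rewrite (morph_comm hH sd_group _ inH_mul), <- (invg_comm sd_group).
      apply SV, lcs_S_mem, IHk; [exact Hy | apply (lcs_subgroup mulG invG oneG k)].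
  - apply (lcs_S_morph_sub hG sd_group _ inG_mul (lcs_subgroup sdm sdi sde (S k))).
    intros a b Ha. rewrite (morph_comm hG sd_group _ inG_mul).
    apply lcs_S_mem, IHk; [exact L1 | exact Ha].
Qed.

Lemma derived_sd_sub k p : derS k p -> sdset (V k) (derived mulG invG oneG k) p.
Proof.
  revert p. induction k; [intros; split; exact I|].
  apply (gen_minimal (sdset_subgroup (Vseq_subgroup (S k)) (Vseq_phi (S k))
                                     (derived_subgroup mulG invG oneG (S k)))).
  intros z [[h g] [[h' g'] [Hp [Hq ->]]]].
  destruct (IHk _ Hp) as [Hh Hg], (IHk _ Hq) as [Hh' Hg']. simpl in *. split.
  - apply (sd_comm_fst_mem (Vseq_subgroup (S k)) (Vseq_normal (S k)));
      [apply Vseq_tw_mem, Hh' | apply Vseq_tw_mem, Hh | apply Vseq_tw_mem, Hh' |].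
    rewrite <- (invg_comm hH). apply (Vseq_subgroup (S k)), Vseq_comm_mem, Hh.
  - apply (derived_S_mem _ _ _ _ _ _ Hg Hg').
Qed.

End Action.

Theorem theorem2 (G H : Type)
  (mulG : G -> G -> G) (invG : G -> G) (oneG : G)
  (mulH : H -> H -> H) (invH : H -> H) (oneH : H)
  (hG : is_group mulG invG oneG) (hH : is_group mulH invH oneH)
  (phi : G -> H -> H) (hphi : is_action mulG oneG mulH phi)
  (n : nat) (hn : 1 <= n) :
  restricts phi (lcs mulG invG oneG (n - 1))
    (Lseq mulG invG oneG mulH invH oneH phi (n - 1)) /\
  restricts phi (derived mulG invG oneG (n - 1))
    (Vseq mulH invH oneH phi (n - 1)) /\
  (forall p : H * G,
     lcs (sd_mul mulG mulH phi) (sd_inv invG invH phi) (sd_one oneG oneH) (n - 1) p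
     <-> sdset (Lseq mulG invG oneG mulH invH oneH phi (n - 1))
               (lcs mulG invG oneG (n - 1)) p) /\
  (forall p : H * G,
     derived (sd_mul mulG mulH phi) (sd_inv invG invH phi) (sd_one oneG oneH) (n - 1) p
     -> sdset (Vseq mulH invH oneH phi (n - 1)) (derived mulG invG oneG (n - 1)) p).
Proof.
  split; [|split; [|split]].
  - apply (restricts_of_invariant hG hphi). exact (Lseq_phi hG hH hphi _).
  - apply (restricts_of_invariant hG hphi). exact (Vseq_phi hH hphi _).
  - intros [h g]. split.
    + apply (lcs_sd_sub hG hH hphi).
    + intros [Hh Hg]. exact (lcs_sd_sup hG hH hphi _ _ _ Hh Hg).
  - apply (derived_sd_sub invG hH hphi).
Qed.
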